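(* Let $h>0$ and let $\nu\in\mathfrak N_{\rceil\cdot\lfloor_h}(X)$ be such that $D_\mu\nu\in H^\omega(X)$. Then \[ \|D_\mu\nu\|_{\mathcal B(X)}\le\|D_\mu\nu-\overline S_h\nu\|_{\mathcal B(X)}+\frac{\rceil\nu\lfloor_h}{\mu(B_h)}\le\frac{\|D_\mu\nu\|_{H^\omega(X)}}{\mu(B_h)}\int_{B_h}\omega(\rho(u,\theta))\,d\mu(u)+\frac{\rceil\nu\lfloor_h}{\mu(B_h)}, \] where $\overline S_h\nu(x)=\frac{\nu(x+B_h)}{\mu(B_h)}$ (an operator $\mathfrak N_{\rceil\cdot\lfloor_h}(X)\to\mathcal B(X)$ of norm $1/\mu(B_h)$). The inequality is sharp: it becomes an equality for the charge $\nu_{e,h}$ with $D_\mu\nu_{e,h}(x)=(\omega(h)-\omega(\rho(x,\theta)))_+$.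
   Context: Standing setting: $(X,\rho)$ is a metric space with a Borel measure $\mu$. $X$ is a commutative monoid, i.e. there is an associative and commutative binary operation $+$ on $X$ with a neutral element $\theta$. The measure is translation invariant: $\mu(x+Q)=\mu(Q)$ for every $\mu$-measurable $Q\subset X$ and every $x\in X$; correspondingly $\int_{B_h}g(x+u)\,d\mu(u)=\int_{x+B_h}g(u)\,d\mu(u)$ for locally integrable $g$. Moreover $\rho(x+y,x)\le\rho(y,\theta)$ for all $x,y\in X$. $B_h$ denotes the open ball of radius $h$ centered at $\theta$, and it is assumed that $0<\mu(B_h)<\infty$ and $B_h\neq\{\theta\}$ for every $h>0$. Every continuous real function on $X$ is integrable on every open ball. For a function $f$, $\|f\|_{\mathcal B(X)}=\sup_{x\in X}|f(x)|$. $\alpha_+=\max\{\alpha,0\}$. A modulus of continuity is a function $\omega\colon[0,\infty)\to[0,\infty)$ that is non-decreasing, semi-additive ($\omega(s+t)\le\omega(s)+\omega(t)$), with $\omega(0)=0$, and not identically zero. $H^\omega(X)$ is the space of $f\colon X\to\mathbb R$ with $\|f\|_{H^\omega(X)}:=\sup_{x\neq y}\frac{|f(x)-f(y)|}{\omega(\rho(x,y))}<\infty$. $\mathfrak N(X)$ is the linear space of charges (signed measures) $\nu$ defined on the $\mu$-measurable subsets of $X$ that are absolutely continuous with respect to $\mu$; for such $\nu$ the Radon–Nikodym derivative $D_\mu\nu$ is the integrable function $f$ with $\nu(Q)=\int_Qf\,d\mu$ for all measurable $Q$. For $h>0$, $\rceil\nu\lfloor_h=\sup_{x\in X}|\nu(x+B_h)|$,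 and $\mathfrak N_{\rceil\cdot\lfloor_h}(X)$ is the set of $\nu\in\mathfrak N(X)$ with $\rceil\nu\lfloor_h<\infty$. *)

From HB Require Import structures.
From mathcomp Require Import all_boot all_order all_algebra.
From mathcomp Require Import all_classical all_reals all_analysis.
Set Implicit Arguments. Unset Strict Implicit. Unset Printing Implicit Defensive.
Import Order.TTheory GRing.Theory Num.Theory.
Import numFieldNormedType.Exports.
Local Open Scope classical_set_scope.
Local Open Scope ring_scope.

Section Defs.
Context {R : realType} {X : Type}.

Definition is_metric (rho : X -> X -> R) : Prop :=
  [/\ (forall x y, 0 <= rho x y),
      (forall x y, rho x y = 0 <-> x = y),
      (forall x y, rho x y = rho y x) &
      (forall x y z, rho x z <= rho x y + rho y z)].

Definition oball (rho : X -> X -> R) (c : X) (r : R) : set X :=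
  [set u | rho c u < r].

Definition B (rho : X -> X -> R) (theta : X) (h : R) : set X := oball rho theta h.

Definition rho_open (rho : X -> X -> R) (A : set X) : Prop :=
  forall x, A x -> exists r, 0 < r /\ oball rho x r `<=` A.

Definition rho_continuous (rho : X -> X -> R) (g : X -> R) : Prop :=
  forall x e, 0 < e -> exists dl, 0 < dl /\
    forall y, rho x y < dl -> `|g x - g y| < e.

Definition transl (add : X -> X -> X) (x : X) (Q : set X) : set X :=
  [set add x u | u in Q].

Definition comm_monoid (add : X -> X -> X) (theta : X) : Prop :=
  [/\ (forall x y z, add x (add y z) = add (add x y) z),
      (forall x y, add x y = add y x) &
      (forall x, add theta x = x)].

Definition modulus_of_continuity (omega : R -> R) : Prop :=
  [/\ (forall t, 0 <= t -> 0 <= omega t),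
      (forall s t, 0 <= s -> s <= t -> omega s <= omega t),
      (forall s t, 0 <= s -> 0 <= t -> omega (s + t) <= omega s + omega t),
      omega 0 = 0 &
      (exists t, 0 <= t /\ omega t != 0)].

Definition supnorm (f : X -> R) : \bar R :=
  ereal_sup [set (`|f x|)%:E | x in [set: X]].

Definition Hnorm (rho : X -> X -> R) (omega : R -> R) (f : X -> R) : \bar R :=
  ereal_sup [set (`|f xy.1 - f xy.2| / omega (rho xy.1 xy.2))%:E
            | xy in [set xy : X * X | xy.1 <> xy.2]].
End Defs.

Section Defs2.
Context {R : realType} {d : measure_display} {X : measurableType d}.
Local Open Scope ereal_scope.

Definition loc_integrable (mu : {measure set X -> \bar R}) (rho : X -> X -> R)
  (g : X -> R) : Prop :=
  forall y r, (0 < r)%R -> mu.-integrable (oball rho y r) (EFin \o g).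

Definition standing_setting (mu : {measure set X -> \bar R}) (rho : X -> X -> R)
  (add : X -> X -> X) (theta : X) : Prop :=
  is_metric rho /\
      (* Borel measure: all rho-open sets are (mu-)measurable *)
      (forall A, rho_open rho A -> measurable A) /\
      comm_monoid add theta /\
      (forall Q x, measurable Q -> measurable (transl add x Q) /\
                                   mu (transl add x Q) = mu Q) /\
      (forall g, loc_integrable mu rho g -> forall x h, (0 < h)%R ->
         mu.-integrable (B rho theta h) (fun u => (g (add x u))%:E) /\
         \int[mu]_(u in B rho theta h) (g (add x u))%:E =
         \int[mu]_(u in transl add x (B rho theta h)) (g u)%:E) /\
      (forall x y, (rho (add x y) x <= rho y theta)%R) /\
      (forall h, (0 < h)%R ->
         0 < mu (B rho theta h) < +oo /\ B rho theta h <> [set theta]) /\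
      (forall g, rho_continuous rho g -> loc_integrable mu rho g).

Definition chnorm (rho : X -> X -> R) (add : X -> X -> X) (theta : X)
  (nu : set X -> \bar R) (h : R) : \bar R :=
  ereal_sup [set `| nu (transl add x (B rho theta h)) | | x in [set: X]].

Definition Sbar (mu : {measure set X -> \bar R}) (rho : X -> X -> R)
  (add : X -> X -> X) (theta : X) (nu : set X -> \bar R) (h : R) (x : X) : \bar R :=
  nu (transl add x (B rho theta h)) / mu (B rho theta h).

Definition supnorm_diff (mu : {measure set X -> \bar R}) (rho : X -> X -> R)
  (add : X -> X -> X) (theta : X) (g : X -> R) (nu : set X -> \bar R) (h : R)
  : \bar R :=
  ereal_sup [set `| (g x)%:E - Sbar mu rho add theta nu h x | | x in [set: X]].
End Defs2.

From HB Require Import structures.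
From mathcomp Require Import all_boot all_order all_algebra.
From mathcomp Require Import all_classical all_reals all_analysis.
From mathcomp Require Import measurable_realfun.
From mathcomp Require Import ring lra.
Set Implicit Arguments. Unset Strict Implicit. Unset Printing Implicit Defensive.
Import Order.TTheory GRing.Theory Num.Theory.
Import numFieldNormedType.Exports.
Local Open Scope classical_set_scope.
Local Open Scope ring_scope.

(* Write [M = mu B_h] and [F x = nu (x + B_h)].  Translation invariance gives
   [M f x - F x = \int_(u in B_h) (f x - f (x + u))], and [rho (x + u) x <= rho u theta]
   bounds the integrand by [|f|_H omega (rho u theta)]; dividing by [M] bounds
   [|f - S_h nu|_B].  The first inequality is the triangle inequality
   [|f x| <= |f x - F x / M| + |F x| / M].
   The extremal density [f_e = (omega h - omega (rho . theta))_+] vanishes off [B_h],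
   has [|f_e|_H = 1] (the ratio is exactly 1 on pairs [(theta, y)] with [y] in [B_h]),
   [|f_e|_B = f_e theta = omega h], and [|nu_e|_h = nu_e B_h = omega h M - J] with
   [J = \int_(u in B_h) omega (rho u theta)]; so the right end of the chain is
   [J / M + (omega h M - J) / M = |f_e|_B] and the whole chain collapses. *)

Section modulus_of_continuity.
Variables (R : realType) (omega : R -> R).
Hypothesis Hom : modulus_of_continuity omega.

Let omega_ge0 : forall t, 0 <= t -> 0 <= omega t. Proof. by case: Hom. Qed.
Let omega_le : forall s t, 0 <= s -> s <= t -> omega s <= omega t.
Proof. by case: Hom. Qed.
Let omegaD : forall s t, 0 <= s -> 0 <= t -> omega (s + t) <= omega s + omega t.
Proof. by case: Hom. Qed.
Let omega0 : omega 0 = 0. Proof. by case: Hom. Qed.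

Lemma modulus_natmul_le t n : 0 <= t -> omega (t *+ n) <= omega t *+ n.
Proof.
move=> t0; elim: n => [|n IHn]; first by rewrite !mulr0n omega0.
rewrite !mulrS; apply: le_trans (omegaD t0 (mulrn_wge0 _ t0)) _.
by rewrite lerD2l.
Qed.

(* Subadditivity would propagate a zero of omega to all of [0, oo). *)
Lemma modulus_gt0 t : 0 < t -> 0 < omega t.
Proof.
move=> t0; rewrite lt_neqAle omega_ge0 ?ltW // andbT eq_sym.
apply/eqP => omega_t0; case: Hom => _ _ _ _ [s [s0 /eqP]]; apply.
have [n sn] : exists n, s <= t *+ n.
  exists (Num.bound (s / t)); rewrite -mulr_natr -ler_pdivrMl //.
  by rewrite mulrC ltW // archi_boundP // divr_ge0 // ltW.
apply/le_anti; rewrite omega_ge0 // andbT.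
apply: le_trans (omega_le s0 sn) _.
by apply: le_trans (modulus_natmul_le n (ltW t0)) _; rewrite omega_t0 mul0rn.
Qed.

Lemma modulus_dist_le a b :
  0 <= a -> 0 <= b -> `|omega a - omega b| <= omega `|a - b|.
Proof.
wlog ab : a b / a <= b.
  move=> H a0 b0; have [ab|/ltW ba] := leP a b; first exact: H.
  by rewrite distrC (distrC a); apply: H.
move=> a0 b0; rewrite distrC (distrC a) !ger0_norm ?subr_ge0 ?omega_le //.
have ba0 : 0 <= b - a by rewrite subr_ge0.
by rewrite lerBlDl; have := omegaD a0 ba0; rewrite subrKC.
Qed.

End modulus_of_continuity.

Lemma dist_max0_le (R : realFieldType) (a b : R) :
  `|Num.max a 0 - Num.max b 0| <= `|a - b|.
Proof.
have := ler_norm (a - b); have := ler_norm (b - a); rewrite distrC ler_norml.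
by case: (leP a 0) => ha; case: (leP b 0) => hb;
  rewrite ?(max_r ha) ?(max_r hb) ?(max_l (ltW ha)) ?(max_l (ltW hb)); lra.
Qed.

Lemma EFin_div (R : realType) (a b : R) : b != 0 -> ((a / b)%:E = a%:E / b%:E)%E.
Proof. by move=> b0; rewrite inver (negbTE b0). Qed.

Section bounded_integrable.
Variables (R : realType) (d : measure_display) (X : measurableType d)
  (mu : {measure set X -> \bar R}).

Lemma bounded_integrable (D : set X) (g : X -> R) (K : R) :
  measurable D -> (mu D < +oo)%E -> measurable_fun D g ->
  (forall u, D u -> `|g u| <= K) -> mu.-integrable D (EFin \o g).
Proof.
move=> mD Dfin mg gK; apply: measurable_bounded_integrable => //.
exists K; split; first exact: num_real.
by move=> M KM u Du; exact/(le_trans (gK u Du))/ltW.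
Qed.

Lemma integrable_cst_lty (D : set X) (c : R) :
  measurable D -> (mu D < +oo)%E -> mu.-integrable D (EFin \o cst c).
Proof.
by move=> mD Dfin; apply: (@bounded_integrable _ (cst c) `|c| mD Dfin).
Qed.
End bounded_integrable.

Section metric.
Variables (R : realType) (X : Type) (rho : X -> X -> R).
Hypothesis Hrho : is_metric rho.

Let rho_ge0 : forall x y, 0 <= rho x y. Proof. by case: Hrho. Qed.
Let rho_eq0 : forall x y, rho x y = 0 <-> x = y. Proof. by case: Hrho. Qed.
Let rhoC : forall x y, rho x y = rho y x. Proof. by case: Hrho. Qed.
Let rho_triangle : forall x y z, rho x z <= rho x y + rho y z.
Proof. by case: Hrho. Qed.
Let rho_xx x : rho x x = 0. Proof. exact/rho_eq0. Qed.

Lemma rho_gt0 x y : x <> y -> 0 < rho x y.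
Proof. by move=> xy; rewrite lt_neqAle rho_ge0 andbT eq_sym; apply/eqP => /rho_eq0. Qed.

Lemma dist_rho_le x y c : `|rho x c - rho y c| <= rho x y.
Proof.
have := rho_triangle x y c; have := rho_triangle y x c; rewrite (rhoC y x).
by rewrite ler_norml; lra.
Qed.

Lemma oball_open c r : rho_open rho (oball rho c r).
Proof.
move=> u cu; exists (r - rho c u); split; first by rewrite subr_gt0.
move=> v uv; apply: le_lt_trans (rho_triangle c u v) _.
by rewrite -ltrBrDl.
Qed.

Variable omega : R -> R.
Hypothesis Hom : modulus_of_continuity omega.

Let omega0 : omega 0 = 0. Proof. by case: Hom. Qed.

Lemma dist_modulus_rho_le x y c :
  `|omega (rho x c) - omega (rho y c)| <= omega (rho x y).
Proof.
apply: le_trans (modulus_dist_le Hom (rho_ge0 _ _) (rho_ge0 _ _)) _.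
by case: Hom => _ omega_le _ _ _; apply: omega_le; rewrite ?dist_rho_le.
Qed.

Lemma Hnorm_bound f : (Hnorm rho omega f < +oo)%E ->
  forall x y, `|f x - f y| <= fine (Hnorm rho omega f) * omega (rho x y).
Proof.
move=> Hfin x y; have [<-|xy] := pselect (x = y).
  by rewrite subrr normr0 rho_xx omega0 mulr0.
have omega_gt0 := modulus_gt0 Hom (rho_gt0 xy).
have le_Hnorm : ((`|f x - f y| / omega (rho x y))%:E <= Hnorm rho omega f)%E.
  by apply: ereal_sup_ubound; exists (x, y).
rewrite -ler_pdivrMr // -lee_fin fineK //.
by rewrite fin_numE gt_eqF ?lt_eqF //; apply: lt_le_trans le_Hnorm; rewrite ltNyr.
Qed.

End metric.

Section measurable_metric.
Variables (R : realType) (d : measure_display) (X : measurableType d)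
  (rho : X -> X -> R).
Hypotheses (Hrho : is_metric rho)
  (measurable_open : forall A, rho_open rho A -> measurable A).

Lemma measurable_oball c r : measurable (oball rho c r).
Proof. exact/measurable_open/oball_open. Qed.

Lemma measurable_rho c : measurable_fun setT (rho ^~ c).
Proof.
apply: (measurability (@RGenInftyO.G R) (RGenInftyO.measurableE R)).
move=> _ [_ [r ->] <-]; rewrite setTI.
have -> : rho ^~ c @^-1` `]-oo, r[ = oball rho c r.
  by apply/seteqP; split => u; rewrite /oball /= in_itv /=; case: Hrho => _ _ -> _.
exact: measurable_oball.
Qed.

Lemma measurable_modulus_rho (omega : R -> R) c :
  (forall s t, 0 <= s -> s <= t -> omega s <= omega t) ->
  measurable_fun setT (fun u => omega (rho u c)).
Proof.
move=> omega_le.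
have -> : (fun u => omega (rho u c)) = (omega \o Num.max 0) \o rho ^~ c.
  by apply/funext => u /=; rewrite max_r //; case: Hrho.
apply: measurableT_comp (measurable_rho c).
apply: nondecreasing_measurable => // s t st.
by apply: omega_le; [rewrite le_max lexx | apply: le_max2].
Qed.

End measurable_metric.

Section standing_setting.
Variables (R : realType) (d : measure_display) (X : measurableType d)
  (mu : {measure set X -> \bar R}) (rho : X -> X -> R) (add : X -> X -> X)
  (theta : X) (omega : R -> R) (h : R).
Hypotheses (HS : standing_setting mu rho add theta)
  (Hom : modulus_of_continuity omega) (h_gt0 : 0 < h).

Let Hrho : is_metric rho. Proof. by case: HS. Qed.
Let rho_ge0 : forall x y, 0 <= rho x y. Proof. by case: Hrho. Qed.
Let rhoC : forall x y, rho x y = rho y x. Proof. by case: Hrho. Qed.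
Let rho_xx x : rho x x = 0. Proof. by case: Hrho => _ /(_ x x) [_ ->]. Qed.
Let measurable_open : forall A, rho_open rho A -> measurable A.
Proof. by case: HS => _ []. Qed.
Let add0 : forall x, add theta x = x. Proof. by case: HS => _ [_ [[]]]. Qed.
Let measurable_transl : forall Q x, measurable Q -> measurable (transl add x Q).
Proof. by move=> Q x mQ; case: HS => _ [_ [_ [/(_ Q x mQ) []]]]. Qed.
Let integral_transl : forall g, loc_integrable mu rho g -> forall x r, 0 < r ->
  mu.-integrable (B rho theta r) (fun u => (g (add x u))%:E) /\
  (\int[mu]_(u in B rho theta r) (g (add x u))%:E =
   \int[mu]_(u in transl add x (B rho theta r)) (g u)%:E)%E.
Proof. by case: HS => _ [_ [_ [_ []]]]. Qed.
Let rho_add : forall x y, rho (add x y) x <= rho y theta.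
Proof. by case: HS => _ [_ [_ [_ [_ []]]]]. Qed.
Let mu_ball : forall r, 0 < r ->
  (0 < mu (B rho theta r) < +oo)%E /\ B rho theta r <> [set theta].
Proof. by case: HS => _ [_ [_ [_ [_ [_ []]]]]]. Qed.

Let omega_ge0 : forall t, 0 <= t -> 0 <= omega t. Proof. by case: Hom. Qed.
Let omega_le : forall s t, 0 <= s -> s <= t -> omega s <= omega t.
Proof. by case: Hom. Qed.
Let omega0 : omega 0 = 0. Proof. by case: Hom. Qed.
Let measurable_omega_rho : measurable_fun setT (fun u => omega (rho u theta)).
Proof. exact: (measurable_modulus_rho Hrho measurable_open theta omega_le). Qed.

Local Notation Bh := (B rho theta h).
Local Notation M := (fine (mu Bh)).

Lemma measurable_Bh : measurable Bh.
Proof. exact: measurable_oball. Qed.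

Lemma mu_Bh_EFin : mu Bh = M%:E.
Proof.
by have [/andP[mu_gt0 mu_lty] _] := mu_ball h_gt0; rewrite fineK // gt0_fin_numE.
Qed.

Lemma mu_Bh_gt0 : 0 < M.
Proof. by have [/andP[mu_gt0 _] _] := mu_ball h_gt0; rewrite -lte_fin -mu_Bh_EFin. Qed.

Lemma mu_Bh_lty : (mu Bh < +oo)%E.
Proof. by rewrite mu_Bh_EFin ltry. Qed.

Lemma Bh_theta : Bh theta.
Proof. by rewrite /B /oball /= rho_xx. Qed.

Lemma Bh_nontrivial : exists2 y, Bh y & y <> theta.
Proof.
apply: contrapT => none; have [_] := mu_ball h_gt0; apply.
apply/seteqP; split => [u Bu|u ->]; last exact: Bh_theta.
by apply: contrapT => ut; apply: none; exists u.
Qed.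

Lemma omega_rho_le u : Bh u -> omega (rho u theta) <= omega h.
Proof. by rewrite /B /oball /= rhoC => /ltW; apply: omega_le. Qed.

Lemma integrable_omega_rho :
  mu.-integrable Bh (EFin \o (fun u => omega (rho u theta))).
Proof.
apply: (bounded_integrable measurable_Bh mu_Bh_lty (K := omega h)).
- exact: measurable_funS measurable_omega_rho.
- by move=> u Bu; rewrite ger0_norm ?omega_ge0 // omega_rho_le.
Qed.

Local Notation J := (fine (\int[mu]_(u in Bh) (omega (rho u theta))%:E)%E).

Lemma integral_omega_rho_EFin :
  (\int[mu]_(u in Bh) (omega (rho u theta))%:E)%E = J%:E.
Proof.
rewrite fineK // integrable_fin_num //; first exact: measurable_Bh.
exact: integrable_omega_rho.
Qed.

Section density.
Variables (nu : set X -> \bar R) (f : X -> R).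
Hypotheses (f_integrable : mu.-integrable setT (EFin \o f))
  (nu_density : forall Q, measurable Q -> nu Q = (\int[mu]_(x in Q) (f x)%:E)%E)
  (chnorm_lty : (chnorm rho add theta nu h < +oo)%E)
  (Hnorm_lty : (Hnorm rho omega f < +oo)%E).

Let f_loc_integrable : loc_integrable mu rho f.
Proof.
by move=> y r r0; apply: integrableS f_integrable => //; exact: measurable_oball.
Qed.

Let integrable_transl x : mu.-integrable Bh (fun u => (f (add x u))%:E).
Proof. by have [] := integral_transl f_loc_integrable x h_gt0. Qed.

Lemma nu_transl x : nu (transl add x Bh) = (\int[mu]_(u in Bh) (f (add x u))%:E)%E.
Proof.
have [_ ->] := integral_transl f_loc_integrable x h_gt0.
by apply/nu_density/measurable_transl/measurable_Bh.
Qed.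

Local Notation F x := (fine (nu (transl add x Bh))).

Lemma nu_transl_EFin x : nu (transl add x Bh) = (F x)%:E.
Proof.
by rewrite fineK // nu_transl integrable_fin_num //; exact: measurable_Bh.
Qed.

Lemma Sbar_EFin x : Sbar mu rho add theta nu h x = (F x / M)%:E.
Proof. by rewrite /Sbar nu_transl_EFin mu_Bh_EFin EFin_div // gt_eqF ?mu_Bh_gt0. Qed.

Lemma abs_nu_transl_le x : (`|F x|%:E <= chnorm rho add theta nu h)%E.
Proof. by apply: ereal_sup_ubound; exists x => //; rewrite nu_transl_EFin. Qed.

Lemma chnorm_EFin :
  chnorm rho add theta nu h = (fine (chnorm rho add theta nu h))%:E.
Proof.
have ch_ge0 : (0 <= chnorm rho add theta nu h)%E.
  by apply: le_trans (abs_nu_transl_le theta); rewrite lee_fin.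
by rewrite fineK // ge0_fin_numE.
Qed.

Lemma Hnorm_ge0 : (0 <= Hnorm rho omega f)%E.
Proof.
have [y _ yt] := Bh_nontrivial.
apply: le_trans (ereal_sup_ubound _) => /=; last by exists (y, theta).
by rewrite lee_fin divr_ge0 // omega_ge0.
Qed.

Lemma Hnorm_EFin : Hnorm rho omega f = (fine (Hnorm rho omega f))%:E.
Proof. by rewrite fineK // ge0_fin_numE ?Hnorm_ge0. Qed.

Lemma integral_dist_transl x :
  ((M * f x - F x)%:E = \int[mu]_(u in Bh) (f x - f (add x u))%:E)%E.
Proof.
have cst_int := integrable_cst_lty (f x) measurable_Bh mu_Bh_lty.
rewrite (_ : (fun u => _) = (cst (f x)%:E \- (fun u => (f (add x u))%:E))%E) //.
rewrite integralB //; last exact: measurable_Bh.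
rewrite integral_cst; last exact: measurable_Bh.
by rewrite -(nu_transl x) nu_transl_EFin mu_Bh_EFin mulrC.
Qed.

Lemma abs_integral_dist_transl_le x :
  `|M * f x - F x| <= fine (Hnorm rho omega f) * J.
Proof.
set H := fine (Hnorm rho omega f).
have H_ge0 : 0 <= H by apply/fine_ge0/Hnorm_ge0.
have cst_int := integrable_cst_lty (f x) measurable_Bh mu_Bh_lty.
have diff_int : mu.-integrable Bh (fun u => (f x - f (add x u))%:E).
  exact: (integrableB measurable_Bh cst_int (integrable_transl x)).
rewrite -lee_fin -abse_EFin integral_dist_transl.
apply: le_trans (le_abse_integral _ measurable_Bh (measurable_int _ diff_int)) _.
apply: (@le_trans _ _ (\int[mu]_(u in Bh) (H * omega (rho u theta))%:E)%E).
  apply: ge0_le_integral => //.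
  - exact: measurable_Bh.
  - by apply: measurableT_comp => //; exact: measurable_int diff_int.
  - apply/measurable_EFinP/measurable_funM; first exact: measurable_cst.
    exact: measurable_funS measurable_omega_rho.
  move=> u Bu; rewrite abse_EFin lee_fin.
  apply: le_trans (Hnorm_bound Hrho Hom Hnorm_lty x (add x u)) _.
  by rewrite ler_wpM2l // omega_le // rhoC rho_add.
under eq_integral do rewrite EFinM.
rewrite integralZl; [by rewrite integral_omega_rho_EFin | exact: measurable_Bh |].
exact: integrable_omega_rho.
Qed.

Lemma dist_Sbar_le x :
  `|f x - F x / M| <= fine (Hnorm rho omega f) * J / M.
Proof.
have M_gt0 := mu_Bh_gt0.
have -> : f x - F x / M = (M * f x - F x) / M by field; rewrite gt_eqF.
rewrite normrM normfV (gtr0_norm M_gt0) ler_pM2r ?invr_gt0 //.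
exact: abs_integral_dist_transl_le.
Qed.

Lemma abs_sub_Sbar_le_supnorm_diff x :
  (`|f x - F x / M|%:E <= supnorm_diff mu rho add theta f nu h)%E.
Proof. by apply: ereal_sup_ubound; exists x => //; rewrite Sbar_EFin -EFinB. Qed.

Lemma supnorm_le_supnorm_diff :
  (supnorm f <= supnorm_diff mu rho add theta f nu h
                + chnorm rho add theta nu h / mu Bh)%E.
Proof.
have M_gt0 := mu_Bh_gt0; set C := fine (chnorm rho add theta nu h).
apply/ereal_supP => _ [x _ <-].
rewrite chnorm_EFin mu_Bh_EFin -EFin_div ?gt_eqF //.
apply: le_trans (leeD2r _ (abs_sub_Sbar_le_supnorm_diff x)); rewrite -EFinD lee_fin.
have F_le : `|F x| <= C by rewrite -lee_fin -chnorm_EFin abs_nu_transl_le.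
rewrite -[X in `|X|](subrK (F x / M)); apply: le_trans (ler_normD _ _) _.
by rewrite lerD2l normrM normfV (gtr0_norm M_gt0) ler_pM2r ?invr_gt0.
Qed.

Lemma supnorm_diff_le :
  (supnorm_diff mu rho add theta f nu h
    <= Hnorm rho omega f / mu Bh * \int[mu]_(u in Bh) (omega (rho u theta))%:E)%E.
Proof.
rewrite Hnorm_EFin mu_Bh_EFin integral_omega_rho_EFin -EFin_div ?gt_eqF ?mu_Bh_gt0 //.
apply/ereal_supP => _ [x _ <-]; rewrite Sbar_EFin -EFinB -EFinM lee_fin mulrAC.
exact: dist_Sbar_le.
Qed.

End density.

Section extremal_density.
Let fe x := Num.max (omega h - omega (rho x theta)) 0.
Let nue Q := (\int[mu]_(x in Q) (fe x)%:E)%E.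

Let omega_h_ge0 : 0 <= omega h. Proof. exact/omega_ge0/ltW. Qed.

Lemma extremal_density_ge0 x : 0 <= fe x.
Proof. by rewrite /fe le_max lexx orbT. Qed.

Lemma extremal_density_le x : fe x <= omega h.
Proof. by rewrite /fe ge_max omega_h_ge0 andbT gerBl omega_ge0. Qed.

Lemma extremal_density_out x : ~ Bh x -> fe x = 0.
Proof.
rewrite /B /oball /= rhoC => /negP; rewrite -leNgt => hx.
by apply: max_r; rewrite subr_le0 omega_le // ltW.
Qed.

Lemma extremal_density_in x : Bh x -> fe x = omega h - omega (rho x theta).
Proof. by move=> /omega_rho_le hx; apply: max_l; rewrite subr_ge0. Qed.

Lemma measurable_extremal_density : measurable_fun setT fe.
Proof.
apply: measurable_maxr; last exact: measurable_cst.
apply: measurable_funB; first exact: measurable_cst.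
exact: measurable_omega_rho.
Qed.

Lemma integrable_extremal_density_Bh : mu.-integrable Bh (EFin \o fe).
Proof.
apply: (bounded_integrable measurable_Bh mu_Bh_lty (K := omega h)).
- exact: measurable_funS measurable_extremal_density.
- by move=> u _; rewrite ger0_norm ?extremal_density_ge0 ?extremal_density_le.
Qed.

Lemma integral_extremal_density_setT :
  (\int[mu]_x (fe x)%:E = \int[mu]_(x in Bh) (fe x)%:E)%E.
Proof.
rewrite [RHS]integral_mkcond; apply: eq_integral => x _.
by rewrite /patch; case: ifPn => // /negP; rewrite in_setE => /extremal_density_out ->.
Qed.

Lemma integrable_extremal_density : mu.-integrable setT (EFin \o fe).
Proof.
apply/integrableP; split; first exact/measurable_EFinP/measurable_extremal_density.
rewrite (eq_integral (fun x => (fe x)%:E)); last first.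
  by move=> x _ /=; rewrite ger0_norm ?extremal_density_ge0.
rewrite integral_extremal_density_setT.
apply: integrable_lty; first exact: measurable_Bh.
exact: integrable_extremal_density_Bh.
Qed.

Lemma integral_extremal_density_Bh :
  (\int[mu]_(x in Bh) (fe x)%:E = (omega h * M - J)%:E)%E.
Proof.
have cst_int := integrable_cst_lty (omega h) measurable_Bh mu_Bh_lty.
rewrite (eq_integral (cst (omega h)%:E \- (fun x => (omega (rho x theta))%:E))%E);
  last by move=> x; rewrite in_setE => /extremal_density_in ->.
rewrite integralB; [|exact: measurable_Bh|exact: cst_int|exact: integrable_omega_rho].
rewrite integral_cst; last exact: measurable_Bh.
by rewrite integral_omega_rho_EFin mu_Bh_EFin.
Qed.

Lemma transl_theta : transl add theta Bh = Bh.
Proof.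
apply/seteqP; split => [_ [u Bu <-]|u Bu]; first by rewrite add0.
by exists u; rewrite ?add0.
Qed.

Lemma chnorm_extremal_density :
  chnorm rho add theta nue h = (omega h * M - J)%:E.
Proof.
have nue_ge0 Q : (0 <= nue Q)%E.
  by apply: integral_ge0 => u _; rewrite lee_fin extremal_density_ge0.
apply/le_anti/andP; split.
  apply/ereal_supP => _ [x _ <-]; rewrite gee0_abs //.
  rewrite -integral_extremal_density_Bh -integral_extremal_density_setT.
  apply: ge0_subset_integral => //.
  - exact/measurable_transl/measurable_Bh.
  - exact/measurable_EFinP/measurable_extremal_density.
  - by move=> u _; rewrite lee_fin extremal_density_ge0.
apply: ereal_sup_ubound; exists theta => //.
by rewrite transl_theta gee0_abs // /nue integral_extremal_density_Bh.
Qed.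

Lemma supnorm_extremal_density : supnorm fe = (omega h)%:E.
Proof.
apply/le_anti/andP; split.
  apply/ereal_supP => _ [x _ <-].
  by rewrite lee_fin ger0_norm ?extremal_density_ge0 ?extremal_density_le.
apply: ereal_sup_ubound; exists theta => //.
rewrite extremal_density_in; last exact: Bh_theta.
by rewrite rho_xx omega0 subr0 ger0_norm.
Qed.

Lemma dist_extremal_density_le x y : `|fe x - fe y| <= omega (rho x y).
Proof.
rewrite /fe; apply: (le_trans (dist_max0_le _ _)).
rewrite opprB addrC addrA subrK distrC.
exact: (dist_modulus_rho_le Hrho Hom).
Qed.

Lemma Hnorm_extremal_density : Hnorm rho omega fe = 1%:E.
Proof.
apply/le_anti/andP; split.
  apply/ereal_supP => _ [[x y] /= xy <-]; rewrite lee_fin.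
  have omega_gt0 := modulus_gt0 Hom (rho_gt0 Hrho xy).
  by rewrite ler_pdivrMr // mul1r dist_extremal_density_le.
have [y By yt] := Bh_nontrivial.
apply: ereal_sup_ubound; exists (theta, y) => /=; first by move=> /esym.
have omega_gt0 := modulus_gt0 Hom (rho_gt0 Hrho (nesym yt)).
rewrite (extremal_density_in Bh_theta) (extremal_density_in By) rho_xx omega0 subr0.
rewrite opprB addrC subrK.
by rewrite rhoC ger0_norm ?ltW // divff // gt_eqF.
Qed.

Lemma extremal_density_sharp :
  mu.-integrable [set: X] (EFin \o fe) /\
  (chnorm rho add theta nue h < +oo)%E /\
  (Hnorm rho omega fe < +oo)%E /\
  (supnorm fe = supnorm_diff mu rho add theta fe nue h
                + chnorm rho add theta nue h / mu Bh)%E /\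
  (supnorm_diff mu rho add theta fe nue h + chnorm rho add theta nue h / mu Bh
   = Hnorm rho omega fe / mu Bh * \int[mu]_(u in Bh) (omega (rho u theta))%:E
     + chnorm rho add theta nue h / mu Bh)%E.
Proof.
have nue_density Q : measurable Q -> nue Q = (\int[mu]_(x in Q) (fe x)%:E)%E by [].
have ch_lty : (chnorm rho add theta nue h < +oo)%E.
  by rewrite chnorm_extremal_density ltry.
have H_lty : (Hnorm rho omega fe < +oo)%E by rewrite Hnorm_extremal_density ltry.
have lower := supnorm_le_supnorm_diff integrable_extremal_density nue_density ch_lty.
have upper := supnorm_diff_le integrable_extremal_density nue_density H_lty.
have rhs_omega_h : (Hnorm rho omega fe / mu Bh
    * \int[mu]_(u in Bh) (omega (rho u theta))%:E
    + chnorm rho add theta nue h / mu Bh = (omega h)%:E)%E.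
  have M_gt0 := mu_Bh_gt0.
  rewrite Hnorm_extremal_density chnorm_extremal_density integral_omega_rho_EFin.
  rewrite mu_Bh_EFin -!EFin_div ?gt_eqF // -EFinM -EFinD; congr EFin.
  by field; rewrite gt_eqF.
have middle_omega_h : (supnorm_diff mu rho add theta fe nue h
    + chnorm rho add theta nue h / mu Bh = (omega h)%:E)%E.
  apply/le_anti/andP; split; last by rewrite -supnorm_extremal_density.
  by rewrite -rhs_omega_h leeD2r.
rewrite supnorm_extremal_density middle_omega_h rhs_omega_h.
by split; [exact: integrable_extremal_density | do !split].
Qed.

End extremal_density.
End standing_setting.

Theorem theorem4 (R : realType) (d : measure_display) (X : measurableType d)
  (mu : {measure set X -> \bar R}) (rho : X -> X -> R) (add : X -> X -> X)
  (theta : X) (omega : R -> R) (h : R) :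
  standing_setting mu rho add theta ->
  modulus_of_continuity omega ->
  0 < h ->
  (forall (nu : {charge set X -> \bar R}) (f : X -> R),
     mu.-integrable [set: X] (EFin \o f) ->
     (forall Q, measurable Q -> nu Q = (\int[mu]_(x in Q) (f x)%:E)%E) ->
     (chnorm rho add theta nu h < +oo)%E ->
     (Hnorm rho omega f < +oo)%E ->
     (supnorm f <= supnorm_diff mu rho add theta f nu h
                   + chnorm rho add theta nu h / mu (B rho theta h))%E /\
     (supnorm_diff mu rho add theta f nu h
        + chnorm rho add theta nu h / mu (B rho theta h)
      <= Hnorm rho omega f / mu (B rho theta h)
           * \int[mu]_(u in B rho theta h) (omega (rho u theta))%:E
         + chnorm rho add theta nu h / mu (B rho theta h))%E) /\
  (let fe := fun x => Num.max (omega h - omega (rho x theta)) 0 in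
   let nue := fun Q => (\int[mu]_(x in Q) (fe x)%:E)%E in
   mu.-integrable [set: X] (EFin \o fe) /\
   (chnorm rho add theta nue h < +oo)%E /\
   (Hnorm rho omega fe < +oo)%E /\
   (supnorm fe = supnorm_diff mu rho add theta fe nue h
                 + chnorm rho add theta nue h / mu (B rho theta h))%E /\
   (supnorm_diff mu rho add theta fe nue h
      + chnorm rho add theta nue h / mu (B rho theta h)
    = Hnorm rho omega fe / mu (B rho theta h)
        * \int[mu]_(u in B rho theta h) (omega (rho u theta))%:E
      + chnorm rho add theta nue h / mu (B rho theta h))%E).
Proof.
move=> HS Hom h_gt0; split; last exact: extremal_density_sharp.
move=> nu f f_integrable nu_density chnorm_lty Hnorm_lty; split.
  exact: supnorm_le_supnorm_diff.
by apply: leeD2r; exact: supnorm_diff_le.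
Qed.
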